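(* Let $f:\{0,1\}^n\to\{0,1\}$ be a non-constant zebra function with $\operatorname{alt}(f)=k$ for some $k\ge1$. Then \[C(f)\le O\!\left(\operatorname{alt}(f)\max\{\mathsf N(f)^2,\mathsf N(\overline f)^2\}\right).\]
   Context: $\mathsf N(f)$ is the minimum degree of a real polynomial $p$ with $|p(x)|\le1/3$ whenever $f(x)=0$ and $|p(x)|\ge1$ whenever $f(x)=1$; $\overline f=1-f$. A monotone path is a sequence $x^{(1)},\dots,x^{(m)}\in\{0,1\}^n$ where each $x^{(i+1)}$ is obtained from $x^{(i)}$ by changing exactly one coordinate from $0$ to $1$. Its alternation number (w.r.t. $f$) is the number of $i$ with $f(x^{(i)})\ne f(x^{(i+1)})$. $\operatorname{alt}(f)$ is the maximum alternation number over monotone paths from $0^n$ to $1^n$. $f$ is a zebra function if all monotone paths from $0^n$ to $1^n$ have the same alternation number. $C(f)$ is the certificate complexity of $f$. Constants in $O(\cdot)$ are absolute. *)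

From HB Require Import structures.
From mathcomp Require Import all_boot all_order all_algebra.
From mathcomp Require Import boolp reals.
From mathcomp Require Import mpoly.
Set Implicit Arguments. Unset Strict Implicit. Unset Printing Implicit Defensive.
Import Order.TTheory GRing.Theory Num.Theory.
Local Open Scope ring_scope.

Definition cube (n : nat) := {ffun 'I_n -> bool}.

Definition negf (n : nat) (f : cube n -> bool) : cube n -> bool := fun x => ~~ f x.

Definition toR (R : realType) (n : nat) (x : cube n) : 'I_n -> R :=
  fun i => (x i)%:R.

(** p is a real polynomial of degree <= d (msize p = 1 + deg p, 0 for p = 0)
    with |p x| <= 1/3 when f x = 0 and |p x| >= 1 when f x = 1. *)
Definition Nwitness (R : realType) (n : nat) (f : cube n -> bool) (d : nat) : Prop :=
  exists p : {mpoly R[n]}, (msize p <= d.+1)%N /\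
    (forall x : cube n, f x = false -> `| p.@[toR R x] | <= 3^-1) /\
    (forall x : cube n, f x = true -> 1 <= `| p.@[toR R x] |).

(** N(f): the minimum such degree. Such a polynomial of degree <= n always
    exists, so the minimum lies in [0, n]; n is only the (unused) default. *)
Definition Ndeg (R : realType) (n : nat) (f : cube n -> bool) : nat :=
  \big[minn/n]_(d < n.+1 | `[< Nwitness R f d >]) (d : nat).

Definition is_cert (n : nat) (f : cube n -> bool) (x : cube n) (S : {set 'I_n}) : bool :=
  [forall y : cube n, [forall i in S, y i == x i] ==> (f y == f x)].

Definition certx (n : nat) (f : cube n -> bool) (x : cube n) : nat :=
  \big[minn/n]_(S : {set 'I_n} | is_cert f x S) #|S|.

Definition certC (n : nat) (f : cube n -> bool) : nat :=
  \max_(x : cube n) certx f x.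

Definition mstep (n : nat) (x y : cube n) : bool :=
  [exists i : 'I_n, [&& x i == false, y i == true &
                       [forall j : 'I_n, (j != i) ==> (y j == x j)]]].

Definition zeros (n : nat) : cube n := [ffun=> false].
Definition ones (n : nat) : cube n := [ffun=> true].

Definition mpath01 (n : nat) (s : seq (cube n)) : Prop :=
  exists s' : seq (cube n), s = zeros n :: s' /\
    path (@mstep n) (zeros n) s' /\ last (zeros n) s' = ones n.

Definition altnum (n : nat) (f : cube n -> bool) (s : seq (cube n)) : nat :=
  count (fun xy : cube n * cube n => f xy.1 != f xy.2) (zip s (behead s)).

(** alt(f): maximum over monotone paths from 0^n to 1^n. Every such path has
    exactly n+1 points, so the maximum is taken over (n+1)-tuples. *)
Definition alt (n : nat) (f : cube n -> bool) : nat :=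
  \max_(t : (n.+1).-tuple (cube n) | `[< mpath01 (tval t) >]) altnum f t.

Definition zebra (n : nat) (f : cube n -> bool) : Prop :=
  forall s t : seq (cube n), mpath01 s -> mpath01 t -> altnum f s = altnum f t.

Definition nonconstant (n : nat) (f : cube n -> bool) : Prop :=
  exists x y : cube n, f x != f y.

From HB Require Import structures.
From mathcomp Require Import all_boot all_order all_algebra.
From mathcomp Require Import boolp reals.
From mathcomp Require Import mpoly.
From mathcomp Require Import zify ring lra.
Set Implicit Arguments. Unset Strict Implicit. Unset Printing Implicit Defensive.
Import Order.TTheory GRing.Theory Num.Theory.

(* For a zebra function the number [level x] of alternations of [f] on a monotone
   path from [0^n] to [x] does not depend on the path, so it is monotone, grows by at
   most one per step, and its parity determines [f x].  Given [x], take [y <= x] of the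
   same level with as few ones as possible and [z >= x] of the same level with as few
   zeros as possible: [f] is constant on [[y, z]], so the ones of [y] and the zeros of
   [z] certify [x].  Peeling [y] down level by level, each level costs one sensitive
   block [W] (flipping any nonempty part of [W] at some [u] changes [f]), so [y] has at
   most [level x * B] ones, and dually [z] at most [(alt f - level x) * B] zeros, where
   [B] bounds sensitive blocks.  Finally [B = O(deg^2)] for the degree of any
   approximating polynomial [p] of [f] or [~f]: averaging [p] over independent flips
   of the coordinates of a sensitive block [W] with probability [q] gives a univariate
   polynomial of the same degree that is large at [q = 0] and small for [q >= 5/|W|],
   which Lagrange interpolation forbids unless [|W| = O(deg^2)]. *)

Section Cube.
Variable n : nat.
Implicit Types (x y u : cube n) (s : seq (cube n)) (W : {set 'I_n}).

Definition raise x i : cube n := [ffun j => (j == i) || x j].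
Definition lower x i : cube n := [ffun j => (j != i) && x j].
Definition compl x : cube n := [ffun j => ~~ x j].
Definition oneset x : {set 'I_n} := [set i | x i].
Definition wt x := #|oneset x|.
Definition cle x y := oneset x \subset oneset y.

Definition sensitive_block (g : cube n -> bool) u W :=
  forall x, (forall i, i \notin W -> x i = u i) -> x != u -> g x != g u.

Definition block_bounded (g : cube n -> bool) G :=
  forall u W, sensitive_block g u W -> #|W| <= G.

Lemma oneset_inj : injective oneset.
Proof. by move=> x y e; apply/ffunP => i; have /setP/(_ i) := e; rewrite !inE. Qed.

Lemma oneset_zeros : oneset (zeros n) = set0.
Proof. by apply/setP => i; rewrite !inE ffunE. Qed.

Lemma oneset_ones : oneset (ones n) = setT.
Proof. by apply/setP => i; rewrite !inE ffunE. Qed.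

Lemma oneset_compl x : oneset (compl x) = ~: oneset x.
Proof. by apply/setP => i; rewrite !inE ffunE. Qed.

Lemma complK : involutive compl.
Proof. by move=> x; apply/ffunP => i; rewrite !ffunE negbK. Qed.

Lemma cle0x x : cle (zeros n) x.
Proof. by rewrite /cle oneset_zeros sub0set. Qed.

Lemma clex1 x : cle x (ones n).
Proof. by rewrite /cle oneset_ones subsetT. Qed.

Lemma cle_refl x : cle x x.
Proof. exact: subxx. Qed.

Lemma cle_trans y x z : cle x y -> cle y z -> cle x z.
Proof. exact: subset_trans. Qed.

Lemma cle_compl x y : cle x y -> cle (compl y) (compl x).
Proof. by rewrite /cle !oneset_compl setCS. Qed.

Lemma cleP x y : reflect (forall i, x i -> y i) (cle x y).
Proof.
apply: (iffP subsetP) => [le i xi | le i]; last by rewrite !inE => /le.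
by have := le i; rewrite !inE => /(_ xi).
Qed.

Lemma wt_lt x y : cle x y -> x != y -> wt x < wt y.
Proof.
move=> le neq; apply: proper_card; rewrite properEneq [_ \subset _]le andbT.
by apply: contra neq => /eqP/oneset_inj ->.
Qed.

Lemma raise_mstep x i : x i = false -> mstep x (raise x i).
Proof.
move=> xi; apply/existsP; exists i; apply/and3P; split.
- by rewrite xi.
- by rewrite ffunE eqxx.
by apply/forall_inP => j /negbTE ji; rewrite ffunE ji.
Qed.

Lemma oneset_raise x i : oneset (raise x i) = i |: oneset x.
Proof. by apply/setP => j; rewrite !inE ffunE. Qed.

Lemma compl_zeros : compl (zeros n) = ones n.
Proof. by apply/ffunP => i; rewrite !ffunE. Qed.

Lemma compl_raise x i : compl (raise x i) = lower (compl x) i.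
Proof. by apply/ffunP => j; rewrite !ffunE negb_or. Qed.

Lemma lower_id x i : lower x i i = false.
Proof. by rewrite ffunE eqxx. Qed.

Lemma cle_lower x i : cle (lower x i) x.
Proof. by apply/cleP => j; rewrite ffunE => /andP[]. Qed.

Lemma raise_lower x i : x i -> raise (lower x i) i = x.
Proof. by move=> xi; apply/ffunP => j; rewrite !ffunE; case: eqVneq => // ->. Qed.

Lemma block_bounded_addb g1 g2 b G : (forall x, g1 x = b (+) g2 x) ->
  block_bounded g2 G -> block_bounded g1 G.
Proof.
move=> e bG u W sW; apply: bG => x xo nxu.
by have := sW x xo nxu; rewrite !e (inj_eq (@addbI b)).
Qed.

Lemma block_bounded_compl g G : block_bounded g G -> block_bounded (g \o compl) G.
Proof.
move=> bG u W sW; apply: (bG (compl u)) => x xo nxu.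
have := sW (compl x); rewrite /= !complK; apply.
  by move=> i iW; rewrite !ffunE xo // ffunE negbK.
by apply: contra nxu => /eqP <-; rewrite complK.
Qed.

Definition walk x (l : seq 'I_n) := scanl raise x l.

Lemma oneset_last_walk x l :
  oneset (last x (walk x l)) = oneset x :|: [set i in l].
Proof.
elim: l x => [|i l IH] x /=; first by rewrite setU0.
rewrite IH oneset_raise; apply/setP => j; rewrite !inE.
by case: (j == i); rewrite ?orbT.
Qed.

Lemma path_walk x l : uniq l -> all (fun i => ~~ x i) l ->
  path (@mstep n) x (walk x l).
Proof.
elim: l x => [|i l IH] x //= /andP[il ul] /andP[xi xl].
rewrite raise_mstep ?(negbTE xi) //=; apply: IH => //.
apply/allP => j jl; rewrite ffunE negb_or (allP xl j jl) andbT.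
by apply: contraNneq il => <-.
Qed.

Definition up x y := walk x (enum (oneset y :\: oneset x)).

Lemma path_up x y : path (@mstep n) x (up x y).
Proof.
apply: path_walk; first exact: enum_uniq.
by apply/allP => i; rewrite mem_enum !inE => /andP[].
Qed.

Lemma last_up x y : cle x y -> last x (up x y) = y.
Proof.
move=> le; apply: oneset_inj; rewrite oneset_last_walk.
apply/setP => i; rewrite !inE mem_enum !inE.
by case: (boolP (x i)) => //= /(cleP _ _ le) ->.
Qed.

Lemma size_up x y : size (up x y) = #|oneset y :\: oneset x|.
Proof. by rewrite size_scanl -cardE. Qed.

Lemma altnum_cat (f : cube n -> bool) a t1 t2 :
  altnum f (a :: t1 ++ t2) = altnum f (a :: t1) + altnum f (last a t1 :: t2).
Proof.
elim: t1 a => [|b t1 IH] a //=.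
by rewrite /altnum /= -/(altnum _ (b :: _)) IH -/(altnum _ (b :: _)) addnA.
Qed.

Lemma altnum_parity (f : cube n -> bool) a t :
  f (last a t) = f a (+) odd (altnum f (a :: t)).
Proof.
elim: t a => [|b t IH] a /=; first by rewrite addbF.
rewrite IH /altnum /= -/(altnum _ (b :: _)) oddD.
by case: (f a); case: (f b); case: (odd _).
Qed.

Lemma mpath01_through x s : path (@mstep n) x s ->
  mpath01 (zeros n :: up (zeros n) x ++ s ++ up (last x s) (ones n)).
Proof.
move=> ps; exists (up (zeros n) x ++ s ++ up (last x s) (ones n)); split=> //.
split; first by rewrite !cat_path path_up last_up ?cle0x // ps path_up.
by rewrite !last_cat last_up ?cle0x // last_up ?clex1.
Qed.

End Cube.

Section Level.
Variables (n : nat) (f : cube n -> bool).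
Implicit Types (x y : cube n).

Definition level x := altnum f (zeros n :: up (zeros n) x).

Lemma level0 : level (zeros n) = 0.
Proof. by rewrite /level /up setDv enum_set0. Qed.

Lemma level_parity x : f x = f (zeros n) (+) odd (level x).
Proof. by rewrite -altnum_parity last_up ?cle0x. Qed.

Lemma level_le_alt x : level x <= alt f.
Proof.
pose t := zeros n :: up (zeros n) x ++ [::] ++ up x (ones n).
have size_t : size t == n.+1.
  rewrite /= size_cat !size_up oneset_zeros oneset_ones setD0 setTD.
  by rewrite cardsC card_ord.
have := @leq_bigmax_cond _ (fun t : n.+1.-tuple (cube n) => `[< mpath01 t >])
  (fun t => altnum f t) (Tuple size_t) (asboolT (@mpath01_through n x [::] isT)).
by rewrite /= altnum_cat; apply: leq_trans; apply: leq_addr.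
Qed.

Hypothesis zf : zebra f.

Lemma level_path x s : path (@mstep n) x s ->
  level (last x s) = level x + altnum f (x :: s).
Proof.
move=> ps; have := zf (mpath01_through ps) (@mpath01_through n (last x s) [::] isT).
have nil0 : altnum f [:: last x s] = 0 by [].
by rewrite !altnum_cat !last_up ?cle0x //= nil0 /level; lia.
Qed.

Lemma level_mono x y : cle x y -> level x <= level y.
Proof. by move=> le; rewrite -(last_up le) (level_path (path_up x y)) leq_addr. Qed.

Lemma level_raise x i : x i = false ->
  level (raise x i) = level x + (f x != f (raise x i)).
Proof.
move=> xi; have /= := @level_path x [:: raise x i].
by rewrite raise_mstep // => /(_ isT) ->; rewrite /altnum /= addn0.
Qed.

End Level.

Section Core.
Variables (n G : nat) (h : cube n -> nat).
Implicit Types (x y z u v w : cube n).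

Hypothesis h_mono : forall x y, cle x y -> h x <= h y.
Hypothesis h_raise : forall x i, x i = false -> h (raise x i) <= (h x).+1.
Hypothesis h0 : h (zeros n) = 0.
Hypothesis h_block : block_bounded (fun x => odd (h x)) G.

Definition strictly_minimal u := forall v, cle v u -> v != u -> h v < h u.

Lemma exists_strictly_minimal u : exists2 z, cle z u & h z = h u /\ strictly_minimal z.
Proof.
have Pu : (fun v => cle v u && (h v == h u)) u by rewrite cle_refl eqxx.
case: (@arg_minnP _ u (fun v => cle v u && (h v == h u)) (@wt n) Pu) => z /andP[zu /eqP hz] zmin.
exists z => //; split=> // w wz nwz; rewrite ltnNge; apply/negP => hzw.
have hw : h w == h u by rewrite -hz eqn_leq hzw h_mono.
by have := zmin w; rewrite (cle_trans wz zu) hw => /(_ isT); rewrite leqNgt wt_lt.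
Qed.

(* Peel off one coordinate of [u] and pass to a strictly minimal point [z] one level
   lower: the coordinates of [u] missing from [z] form a sensitive block. *)
Lemma wt_le_strictly_minimal u : strictly_minimal u -> wt u <= h u * G.
Proof.
move: {2}(h u) (erefl (h u)) => c; elim: c u => [|c IH] u hu minu.
  case: (eqVneq u (zeros n)) => [->|nz]; first by rewrite /wt oneset_zeros cards0.
  by have := minu _ (cle0x u); rewrite eq_sym nz h0 hu => /(_ isT).
have [i ui] : exists i, u i.
  case: (pickP (fun j => u j)) => [i ui | u0]; first by exists i.
  move: hu; have -> : u = zeros n by apply/ffunP => j; rewrite ffunE u0.
  by rewrite h0.
set v := lower u i.
have vu : v != u by apply: contraTneq ui => <-; rewrite lower_id.
have hv : h v = c.
  have := minu _ (cle_lower u i) vu; have := h_raise (lower_id u i).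
  by rewrite raise_lower // hu /v; lia.
have [z zv [hz minz]] := exists_strictly_minimal v.
have zu := cle_trans zv (cle_lower u i).
set W := oneset u :\: oneset z.
have bW : #|W| <= G.
  apply: (h_block (u := u)) => x xo nxu.
  have zx : cle z x.
    apply/cleP => j zj; rewrite xo ?(cleP _ _ zu) //.
    by rewrite /W !inE zj.
  have xu : cle x u.
    apply/cleP => j xj; case: (boolP (j \in W)) => [|jW]; first by rewrite /W !inE => /andP[].
    by rewrite -xo.
  have := minu _ xu nxu; have := h_mono zx; rewrite hz hv hu => ge lt.
  by rewrite (_ : h x = c) ?hu /=; [case: (odd c) | lia].
have wtu : wt u = wt z + #|W|.
  by rewrite /wt -(cardsID (oneset z) (oneset u)) (setIidPr zu).
by rewrite wtu hu mulSn; have := IH z (etrans hz hv) minz; lia.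
Qed.

Lemma exists_core_below u : exists2 y, cle y u & h y = h u /\ wt y <= h u * G.
Proof.
have [y yu [hy miny]] := exists_strictly_minimal u.
by exists y => //; split=> //; rewrite -hy wt_le_strictly_minimal.
Qed.

End Core.

Section Certificate.
Variables (n G : nat) (f : cube n -> bool).
Hypotheses (zf : zebra f) (fG : block_bounded f G).
Implicit Types (x y z w : cube n).

Lemma level_raise_le x i : x i = false -> level f (raise x i) <= (level f x).+1.
Proof. by move=> xi; rewrite level_raise // addnC; case: (_ != _). Qed.

Lemma level_block : block_bounded (fun x => odd (level f x)) G.
Proof.
by apply: (block_bounded_addb (b := f (zeros n))) fG => x; rewrite (level_parity f x) addbA addbb.
Qed.

Local Notation top := (level f (ones n)).

Lemma level_le_top x : level f x <= top.
Proof. by have := level_mono zf (clex1 x). Qed.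

(* [level] read downwards from [1^n]; it satisfies the hypotheses of the [Core]
   section, which then bounds the zeros of the upper end of a certificate. *)
Definition colevel x := top - level f (compl x).

Lemma colevel_mono x y : cle x y -> colevel x <= colevel y.
Proof. by move=> le; apply/leq_sub2l/(level_mono zf)/cle_compl. Qed.

Lemma colevel_raise_le x i : x i = false -> colevel (raise x i) <= (colevel x).+1.
Proof.
move=> xi; have cxi : compl x i by rewrite ffunE xi.
have := level_raise_le (lower_id (compl x) i); rewrite raise_lower // -compl_raise.
by have := level_le_top (compl x); have := level_le_top (compl (raise x i)); rewrite /colevel; lia.
Qed.

Lemma colevel0 : colevel (zeros n) = 0.
Proof. by rewrite /colevel compl_zeros subnn. Qed.

Lemma colevel_block : block_bounded (fun x => odd (colevel x)) G.
Proof.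
apply: (block_bounded_addb (b := odd top (+) f (zeros n))) (block_bounded_compl fG) => x.
by rewrite /colevel /= oddB ?level_le_top // (level_parity f (compl x)) -addbA addKb.
Qed.

Lemma certx_le_alt_mul x : certx f x <= alt f * G.
Proof.
have [y yx [ly wty]] :=
  exists_core_below (level_mono zf) level_raise_le (level0 f) level_block x.
have [z zx [lz wtz]] :=
  exists_core_below colevel_mono colevel_raise_le colevel0 colevel_block (compl x).
rewrite /colevel complK in lz wtz.
have lcz : level f (compl z) = level f x.
  by have := level_le_top x; have := level_le_top (compl z); lia.
set S := oneset y :|: oneset z.
have cert : is_cert f x S.
  apply/forallP => w; apply/implyP => /forall_inP agree.
  have yw : cle y w.
    by apply/cleP => i yi; rewrite (eqP (agree i _)) ?inE ?yi // (cleP _ _ yx).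
  have wz : cle w (compl z).
    apply/cleP => i wi; rewrite ffunE; apply/negP => zi.
    by have := cleP _ _ zx i zi; rewrite ffunE -(eqP (agree i _)) ?inE ?zi ?orbT ?wi.
  have := level_mono zf yw; have := level_mono zf wz; rewrite ly lcz => le1 le2.
  have e : level f w = level f x by lia.
  by rewrite (level_parity f w) e -level_parity.
have certS : certx f x <= #|S| := bigmin_le_cond n (fun T : {set 'I_n} => #|T|) cert.
apply: (leq_trans certS); apply: (leq_trans (leq_card_setU _ _)).
apply: (leq_trans (leq_add wty wtz)).
by rewrite -mulnDl subnKC ?level_le_top // leq_mul2r level_le_alt orbT.
Qed.

End Certificate.

Definition dist (j i : nat) := ((j - i) + (i - j))%N.

Lemma fact_addn (a b : nat) : (a + b)`! = a`! * \prod_(1 <= j < b.+1) (j + a).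
Proof.
rewrite !fact_prod (big_cat_nat _ (n := a.+1)) //=; last by rewrite ltnS leq_addr.
congr (_ * _); rewrite -[a.+1]add1n (_ : (a + b).+1 = b.+1 + a); last by rewrite addSn addnC.
by rewrite big_addn addnK.
Qed.

Lemma big_nat_skip (F : nat -> nat) i d : 0 < i <= d ->
  \prod_(1 <= j < d.+1 | j != i) F j = \prod_(1 <= j < i) F j * \prod_(i.+1 <= j < d.+1) F j.
Proof.
move=> /andP[i0 id].
rewrite (big_cat_nat _ (n := i)) //=; last by rewrite ltnW.
congr (_ * _).
  rewrite big_nat_cond [RHS]big_nat_cond; apply: eq_bigl => j.
  by case: (ltnP j i) => ji; rewrite ?(ltn_eqF ji) ?andbF ?andbT.
have := @big_ltn_cond _ 1 muln i d.+1 (fun j => j != i) F id.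
move=> /= ->; rewrite eqxx /= big_nat_cond [RHS]big_nat_cond; apply: eq_bigl => j.
by case: (ltnP i j) => ij; rewrite ?(gtn_eqF ij) ?andbT //= ltnNge ij.
Qed.

Lemma prod_dist_fact i d : 0 < i <= d ->
  \prod_(1 <= j < d.+1 | j != i) dist j i = (i.-1)`! * (d - i)`!.
Proof.
move=> /andP[i0 id]; rewrite big_nat_skip ?i0 //; congr (_ * _).
  rewrite (@eq_big_nat _ _ _ _ _ _ (fun j => i - j)); last first.
    by move=> j /andP[_ ji]; rewrite /dist (eqP (ltnW ji)) add0n.
  rewrite big_nat_rev /= (@eq_big_nat _ _ _ _ _ _ (fun j => j)); last first.
    by move=> j /andP[j1 ji]; rewrite add1n subSS subKn // ltnW.
  by rewrite -{1}(prednK i0) -fact_prod.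
rewrite (@eq_big_nat _ _ _ _ _ _ (fun j => j - i)); last first.
  by move=> j /andP[ij _]; rewrite /dist (eqP (ltnW ij)) addn0.
rewrite -[i.+1]add1n big_addn fact_prod subSn //.
by apply: eq_bigr => j _; rewrite addnK.
Qed.

Lemma fact_sq_le i d : i <= d -> d`! ^ 2 <= (d - i)`! * (d + i)`!.
Proof.
move=> id; have e := fact_addn (d - i) i; rewrite subnK // in e.
rewrite [X in _ <= _ * X]fact_addn expnS expn1 {1}e -mulnA leq_pmul2l ?fact_gt0 //.
rewrite [_ * d`!]mulnC leq_pmul2l ?fact_gt0 //.
by apply: leq_prod => j _; rewrite leq_add2l leq_subr.
Qed.

(* Both sides are computed by factorials: the ratio of the right-hand product to the
   left-hand one is [2 (d`!) ^ 2 / ((d - i)`! (d + i)`!)]. *)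
Lemma prod_sq_le_prod_dist i d : 0 < i <= d ->
  (\prod_(1 <= j < d.+1 | j != i) j) ^ 2 <=
  2 * (\prod_(1 <= j < d.+1 | j != i) dist j i) * \prod_(1 <= j < d.+1 | j != i) (j + i).
Proof.
move=> hid; have /andP[i0 id] := hid.
set A := \prod_(1 <= j < d.+1 | j != i) j.
set C := \prod_(1 <= j < d.+1 | j != i) (j + i).
have mi : i \in index_iota 1 d.+1 by rewrite mem_index_iota i0 ltnS.
have hA : i * A = d`! by rewrite fact_prod (bigD1_seq i) ?iota_uniq.
have hC : 2 * i * C * i`! = (d + i)`!.
  by rewrite addnC fact_addn (bigD1_seq i) ?iota_uniq //= -/C; ring.
have hfi : i`! = i * (i.-1)`! by rewrite -{1}(prednK i0) factS prednK.
rewrite -(leq_pmul2l (_ : 0 < i ^ 2)) ?expn_gt0 ?i0 // -expnMn hA.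
apply: (leq_trans (fact_sq_le id)); rewrite -hC hfi prod_dist_fact //.
by apply: eq_leq; ring.
Qed.

Section LagrangeWeights.
Variable R : realFieldType.
Local Open Scope ring_scope.

(* Constants are kept as quotients of naturals, so comparisons reduce to [lia] on
   cross products. *)
Definition ratn (a b : nat) : R := a%:R / b%:R.

Lemma ratn_ge0 a b : 0 <= ratn a b.
Proof. by rewrite /ratn divr_ge0 ?ler0n. Qed.

Lemma ratn_le a b c e : (0 < b)%N -> (0 < e)%N -> (a * e <= c * b)%N -> ratn a b <= ratn c e.
Proof.
move=> b0 e0 h; rewrite /ratn ler_pdivrMr ?ltr0n // mulrAC ler_pdivlMr ?ltr0n //.
by rewrite -!natrM ler_nat.
Qed.

Lemma ratn_eq a b c e : (0 < b)%N -> (0 < e)%N -> (a * e = c * b)%N -> ratn a b = ratn c e.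
Proof.
move=> b0 e0 h; rewrite /ratn; apply/eqP; rewrite eqr_div ?pnatr_eq0 -?lt0n //.
by rewrite -!natrM h.
Qed.

Lemma ratn_mul a b c e : ratn a b * ratn c e = ratn (a * c) (b * e).
Proof. by rewrite /ratn mulf_div -!natrM. Qed.

Lemma ratn_add a b c e : (0 < b)%N -> (0 < e)%N ->
  ratn a b + ratn c e = ratn (a * e + c * b) (b * e).
Proof.
move=> b0 e0; rewrite /ratn addf_div ?pnatr_eq0 -?lt0n //.
by rewrite -!natrM -natrD.
Qed.

Lemma ratn_prod (I : Type) (r : seq I) (P : pred I) (a b : I -> nat) :
  \prod_(j <- r | P j) ratn (a j) (b j) = ratn (\prod_(j <- r | P j) a j) (\prod_(j <- r | P j) b j).
Proof. by rewrite /ratn !natr_prod -prodfV -big_split. Qed.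

Local Notation node_ratio j := (ratn (20 * j ^ 2 + 1) (20 * j ^ 2)).
Local Notation sq_ratio j i := (ratn (j ^ 2) (dist j i * (j + i))).

Lemma prod_node_ratio_le d :
  \prod_(1 <= j < d.+1) node_ratio j <= ratn (10 * d + 9) (9 * d + 9).
Proof.
elim: d => [|d IH].
  by rewrite big_geq // /ratn divff // pnatr_eq0.
rewrite big_nat_recr //=.
apply: le_trans (ler_wpM2r (ratn_ge0 _ _) IH) _.
rewrite ratn_mul; apply: ratn_le; rewrite ?muln_gt0 ?expn_gt0 //.
  by apply/and4P; split; lia.
lia.
Qed.

Lemma sum_inv_sq_le d : \sum_(1 <= i < d.+1) ratn 1 (i ^ 2) <= 2 - ratn 2 d.+1.
Proof.
elim: d => [|d IH].
  by rewrite big_geq // /ratn divr1 subrr.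
rewrite big_nat_recr //=.
have h : ratn 1 (d.+1 ^ 2) + ratn 2 d.+2 <= ratn 2 d.+1.
  rewrite ratn_add ?expn_gt0 //; apply: ratn_le; rewrite ?muln_gt0 ?expn_gt0 //; lia.
lra.
Qed.

(* The interpolation nodes, to be divided by the block size [m]: [node 0 >= 5] makes
   [(1 - node 0 / m) ^ m <= 1/6], and quadratic growth keeps the Lagrange
   coefficients at [0] summable while [node d] stays [O(d ^ 2)]. *)
Definition node (k : nat) : R := (5 + 100 * k ^ 2)%N%:R.
Definition lfactor (j i : nat) : R := node j / (node j - node i).
Definition lcoef (d i : nat) : R := \prod_(0 <= j < d.+1 | j != i) lfactor j i.

Lemma norm_natrB (a b : nat) : `|a%:R - b%:R : R| = (dist a b)%:R.
Proof.
rewrite /dist; case: (leqP b a) => h.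
  by rewrite -natrB // normr_nat (eqP h) addn0.
rewrite -opprB normrN -natrB ?(ltnW h) // normr_nat.
by rewrite (eqP (ltnW h)) add0n.
Qed.

Lemma dist_node j i : dist (5 + 100 * j ^ 2) (5 + 100 * i ^ 2) = (100 * (dist j i * (j + i)))%N.
Proof.
rewrite /dist !subnDl -!mulnBr; case: (leqP i j) => h.
  have a : (j - i + (i - j) = j - i)%N by rewrite (eqP h) addn0.
  have b : (i ^ 2 - j ^ 2 = 0)%N by apply/eqP; rewrite subn_eq0 leq_exp2r.
  by rewrite b addn0 subn_sqr a.
have a : (j - i + (i - j) = i - j)%N by rewrite (eqP (ltnW h)) add0n.
have b : (j ^ 2 - i ^ 2 = 0)%N by apply/eqP; rewrite subn_eq0 leq_exp2r // ltnW.
by rewrite b add0n subn_sqr a addnC.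
Qed.

Lemma norm_lfactor j i : (0 < j)%N -> j != i ->
  `|lfactor j i| = node_ratio j * sq_ratio j i.
Proof.
move=> j0 ji.
have D0 : (0 < dist j i)%N by move: ji; rewrite /dist; case: (ltngtP j i) => //; lia.
rewrite /lfactor normrM normfV /node norm_natrB normr_nat dist_node ratn_mul.
apply: ratn_eq; rewrite ?muln_gt0 ?expn_gt0 ?D0 ?j0 ?addn_gt0 ?j0 //.
set D := dist j i; set J := (j ^ 2)%N; lia.
Qed.

Lemma prod_sq_ratio_le i d : (0 < i <= d)%N ->
  \prod_(1 <= j < d.+1 | j != i) sq_ratio j i <= 2.
Proof.
move=> hid; have /andP[i0 id] := hid.
rewrite ratn_prod.
have pos : (0 < \prod_(1 <= j < d.+1 | j != i) (dist j i * (j + i)))%N.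
  apply: prodn_cond_gt0 => j ji; rewrite muln_gt0 addn_gt0 i0 orbT andbT.
  by move: ji; rewrite /dist; case: (ltngtP j i) => //; lia.
apply: le_trans (ratn_le (c := 2) (e := 1) pos _ _) _ => //.
  rewrite muln1 [X in (_ <= 2 * X)%N]big_split /=.
  rewrite [X in (X <= _)%N](eq_bigr (fun j => j * j)%N); last by move=> j _; rewrite mulnn.
  rewrite [X in (X <= _)%N]big_split /= mulnn mulnA; exact: prod_sq_le_prod_dist.
by rewrite /ratn divr1.
Qed.

Lemma prod_node_ratio_skip_le i d : (0 < i <= d)%N ->
  \prod_(1 <= j < d.+1 | j != i) node_ratio j <= ratn 10 9.
Proof.
move=> hid; have /andP[i0 id] := hid.
have mi : i \in index_iota 1 d.+1 by rewrite mem_index_iota i0 ltnS.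
have full := prod_node_ratio_le d.
rewrite (bigD1_seq i) ?iota_uniq //= in full.
have ai : 1 <= node_ratio i.
  rewrite -[1](@divr1 R) -[1%R]/(1%:R).
  by apply: ratn_le; rewrite ?muln_gt0 ?expn_gt0 ?i0 //; lia.
have p0 : 0 <= \prod_(1 <= j < d.+1 | j != i) node_ratio j.
  by apply: prodr_ge0 => j _; exact: ratn_ge0.
apply: le_trans (ler_peMl p0 ai) _.
apply: le_trans full _; apply: ratn_le => //; lia.
Qed.

Lemma norm_lfactor0 i : (0 < i)%N -> `|lfactor 0 i| = ratn 1 (20 * i ^ 2).
Proof.
move=> i0; rewrite /lfactor normrM normfV /node norm_natrB normr_nat dist_node.
apply: ratn_eq; rewrite ?muln_gt0 ?expn_gt0 ?i0 //=.
  by rewrite /dist; lia.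
rewrite /dist; set J := (i ^ 2)%N; lia.
Qed.

Lemma norm_lcoef0_le d : `|lcoef d 0| <= ratn 10 9.
Proof.
rewrite normr_prod.
have := @big_ltn_cond _ 1 *%R 0 d.+1 (fun j => j != 0) (fun j => `|lfactor j 0|) erefl.
move=> /= ->.
rewrite big_nat_cond (eq_bigr (fun j => node_ratio j)); last first.
  move=> j /andP[/andP[j0 _] _]; rewrite norm_lfactor // ?(gtn_eqF j0) //.
  rewrite (_ : ratn (j ^ 2) (dist j 0 * (j + 0)) = 1) ?mulr1 //.
  by rewrite /dist subn0 sub0n !addn0 mulnn /ratn divff // pnatr_eq0 -lt0n expn_gt0 j0.
have -> : \prod_(1 <= i < d.+1 | (1 <= i < d.+1)%N && (i != 0)) node_ratio i =
          \prod_(1 <= i < d.+1) node_ratio i.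
  by rewrite [RHS]big_nat_cond; apply: eq_bigl => -[|j] //=; rewrite andbT.
apply: le_trans (prod_node_ratio_le d) _; apply: ratn_le => //; lia.
Qed.

Lemma norm_lcoef_le i d : (0 < i <= d)%N -> `|lcoef d i| <= ratn 1 (9 * i ^ 2).
Proof.
move=> hid; have /andP[i0 id] := hid.
rewrite normr_prod.
have := @big_ltn_cond _ 1 *%R 0 d.+1 (fun j => j != i) (fun j => `|lfactor j i|) erefl.
move=> /= ->; rewrite eq_sym -lt0n i0 norm_lfactor0 //.
rewrite big_nat_cond (eq_bigr (fun j => node_ratio j * sq_ratio j i));
  last by move=> j /andP[/andP[j0 _] ji]; rewrite norm_lfactor.
rewrite -big_nat_cond big_split /=.
have p0a : 0 <= \prod_(1 <= j < d.+1 | j != i) node_ratio j.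
  by apply: prodr_ge0 => j _; exact: ratn_ge0.
have p0b : 0 <= \prod_(1 <= j < d.+1 | j != i) sq_ratio j i.
  by apply: prodr_ge0 => j _; exact: ratn_ge0.
apply: le_trans (ler_wpM2l (ratn_ge0 _ _) (ler_pM p0a p0b (prod_node_ratio_skip_le hid) (prod_sq_ratio_le hid))) _.
have -> : (2 : R) = ratn 2 1 by rewrite /ratn divr1.
rewrite !ratn_mul; apply: ratn_le; rewrite ?muln_gt0 ?expn_gt0 ?i0 //; lia.
Qed.

Lemma sum_norm_lcoef_le d : \sum_(0 <= i < d.+1) `|lcoef d i| <= ratn 4 3.
Proof.
rewrite big_ltn //.
have tail : \sum_(1 <= i < d.+1) `|lcoef d i| <= 9%:R^-1 * \sum_(1 <= i < d.+1) ratn 1 (i ^ 2).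
  rewrite mulr_sumr; apply: ler_sum_nat => i /andP[i0 id].
  apply: le_trans (norm_lcoef_le _) _; first by rewrite i0 -ltnS.
  by rewrite /ratn natrM invfM !mul1r.
have := norm_lcoef0_le d; have := sum_inv_sq_le d; have := ratn_ge0 2 d.+1.
move: tail; rewrite /ratn; set S := \sum_(1 <= i < d.+1) _; set T := \sum_(1 <= i < d.+1) _.
set c := `| _ |; set e := (2%:R / _); lra.
Qed.

End LagrangeWeights.

Section Interpolation.
Local Open Scope ring_scope.

Lemma size_prod_leq_sum (R : nzRingType) (I : Type) (r : seq I) (F : I -> {poly R})
    (e : I -> nat) : (forall i, (size (F i) <= (e i).+1)%N) ->
  (size (\prod_(i <- r) F i)%R <= (\sum_(i <- r) e i).+1)%N.
Proof.
move=> hF; elim: r => [|a r IH]; first by rewrite !big_nil size_poly1.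
rewrite !big_cons; apply: leq_trans (size_polyMleq _ _) _.
have := hF a; move: IH; lia.
Qed.

Lemma lagrange_at0 (K : fieldType) d (xs : nat -> K) (P : {poly K}) :
  injective xs -> (size P <= d.+1)%N ->
  P.[0] = \sum_(i < d.+1) P.[xs i] * \prod_(j < d.+1 | j != i) (xs j / (xs j - xs i)).
Proof.
move=> xs_inj sP; rewrite {1}(lagrange_gen (ltn0Sn d) xs_inj sP) horner_sum.
apply: eq_bigr => i _; rewrite hornerCM (lagrangeE (ltn0Sn d) xs_inj) /= hornerCM.
congr (_ * _); rewrite !horner_prod -prodfV -big_split /=.
apply: eq_bigr => j _; rewrite !hornerXsubC.
by rewrite mulrC sub0r mulNr -mulrN -invrN opprB.
Qed.

Lemma one_sub_expr_le (R : realFieldType) (x : R) (k : nat) : 0 <= x <= 1 ->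
  (1 - x) ^+ k * (1 + k%:R * x) <= 1.
Proof.
move=> /andP[x0 x1]; elim: k => [|k IH]; first by rewrite expr0 mul0r addr0 mulr1.
rewrite exprS -mulrA.
have y0 : 0 <= (1 - x) ^+ k by rewrite exprn_ge0 // subr_ge0.
set y := (1 - x) ^+ k in IH y0 *.
have h : 0 <= x ^+ 2 * (k.+1)%:R * y.
  by apply: mulr_ge0 => //; apply: mulr_ge0; [exact: sqr_ge0 | exact: ler0n].
rewrite -natr1 in h *; nra.
Qed.

End Interpolation.

Section FlipMean.
Local Open Scope ring_scope.

Variables (R : realType) (n : nat) (u : cube n) (W : {set 'I_n}) (p : {mpoly R[n]}).
Implicit Types (q : R) (x : cube n).

(* [flip_mean q] is the expected value of [p] at [u] with every coordinate in [W]
   flipped independently with probability [q]. *)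
Definition flip_prob q (i : 'I_n) (b : bool) : R :=
  if i \in W then (if b == u i then 1 - q else q) else (b == u i)%:R.
Definition flip_weight q x : R := \prod_i flip_prob q i (x i).
Definition flip_mean q : R := \sum_x flip_weight q x * p.@[toR R x].

Lemma sum_flip_prob q i : \sum_b flip_prob q i b = 1.
Proof.
rewrite big_bool /flip_prob; case: (i \in W); case: (u i) => /=;
  by rewrite ?subrK ?addr0 ?add0r // addrC subrK.
Qed.

Lemma sum_flip_weight q : \sum_x flip_weight q x = 1.
Proof. by rewrite /flip_weight -bigA_distr_bigA /= big1 // => i _; exact: sum_flip_prob. Qed.

Lemma flip_weight_ge0 q x : 0 <= q <= 1 -> 0 <= flip_weight q x.
Proof.
move=> /andP[q0 q1]; apply: prodr_ge0 => i _; rewrite /flip_prob.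
by case: (i \in W); case: (_ == _); rewrite ?subr_ge0 ?ler0n.
Qed.

Lemma flip_weight_u q : flip_weight q u = (1 - q) ^+ #|W|.
Proof.
rewrite /flip_weight (eq_bigr (fun i => if i \in W then 1 - q else 1)); last first.
  by move=> i _; rewrite /flip_prob eqxx; case: (i \in W).
by rewrite -big_mkcond prodr_const.
Qed.

Lemma flip_weight_eq0 q x i : x i != u i -> (q == 0) || (i \notin W) ->
  flip_weight q x = 0.
Proof.
move=> /negbTE xi qW; rewrite /flip_weight (bigD1 i) //= /flip_prob xi.
by case/orP: qW => [/eqP -> | /negbTE ->]; case: (i \in W); rewrite mul0r.
Qed.

Lemma flip_mean0 : flip_mean 0 = p.@[toR R u].
Proof.
rewrite /flip_mean (bigD1 u) //= big1 ?addr0.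
  by rewrite flip_weight_u subr0 expr1n mul1r.
move=> x nxu; have [i xi] : exists i, x i != u i.
  apply/existsP; apply: contraNT nxu => /existsPn xu.
  by apply/eqP/ffunP => i; exact/eqP/negbNE.
by rewrite (flip_weight_eq0 xi) ?eqxx ?mul0r.
Qed.

Definition flip_poly (i : 'I_n) : {poly R} :=
  if i \in W then (if u i then 1 - 'X else 'X) else (u i)%:R%:P.

(* As [b%:R ^+ k = b%:R] for [k > 0], the mean of the monomial ['X^m] is the product
   of the [flip_poly i] over the variables of [m], of degree at most [mdeg m]. *)
Definition flip_mean_poly : {poly R} :=
  \sum_(m <- msupp p) p@_m *: \prod_i (if m i == 0%N then 1 else flip_poly i).

Lemma horner_flip_poly q i : (flip_poly i).[q] = flip_prob q i true.
Proof. by rewrite /flip_poly /flip_prob; case: (i \in W); case: (u i); rewrite /= !hornerE. Qed.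

Lemma sum_flip_prob_expr q i k :
  \sum_b flip_prob q i b * b%:R ^+ k = (if k == 0%N then 1 else flip_poly i).[q].
Proof.
rewrite big_bool /=; case: k => [|k] /=.
  by rewrite !expr0 !mulr1 hornerE -(sum_flip_prob q i) big_bool.
by rewrite expr1n expr0n /= !mulr1 mulr0 addr0 horner_flip_poly.
Qed.

Lemma flip_mean_polyE q : flip_mean q = flip_mean_poly.[q].
Proof.
rewrite /flip_mean /flip_mean_poly horner_sum.
under eq_bigr do rewrite mevalE mulr_sumr.
rewrite exchange_big /=; apply: eq_bigr => m _.
rewrite hornerZ horner_prod.
rewrite (eq_bigr (fun x => p@_m * \prod_i (flip_prob q i (x i) * (x i)%:R ^+ m i))); last first.
  by move=> x _; rewrite mulrCA /flip_weight -big_split.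
rewrite -mulr_sumr; congr (_ * _).
rewrite -(bigA_distr_bigA (fun i (b : bool) => flip_prob q i b * b%:R ^+ m i)) /=.
by apply: eq_bigr => i _; exact: sum_flip_prob_expr.
Qed.

Lemma size_flip_mean_poly d : (msize p <= d.+1)%N -> (size flip_mean_poly <= d.+1)%N.
Proof.
move=> sp; rewrite /flip_mean_poly big_seq.
apply: (big_ind (fun P : {poly R} => (size P <= d.+1)%N)).
- by rewrite size_poly0.
- by move=> P Q sP sQ; apply: leq_trans (size_polyD _ _) _; rewrite geq_max sP sQ.
move=> m mp; apply: leq_trans (size_scale_leq _ _) _.
apply: leq_trans (size_prod_leq_sum (e := fun i => nat_of_bool (m i != 0%N)) _ _) _.
  move=> i; case: (m i == 0%N) => /=; first by rewrite size_poly1.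
  rewrite /flip_poly; case: (i \in W); last exact: leq_trans (size_polyC_leq1 _) _.
  case: (u i); last by rewrite size_polyX.
  by apply: leq_trans (size_polyD _ _) _; rewrite size_polyN size_polyX size_poly1.
have := msize_mdeg_lt mp; rewrite mdegE => lt_m.
have : (\sum_i nat_of_bool (m i != 0%N) <= \sum_i m i)%N.
  by apply: leq_sum => i _; case: (m i).
by move=> le_m; apply: leq_ltn_trans le_m _; exact: leq_trans lt_m sp.
Qed.

Variable g : cube n -> bool.
Hypothesis p_small : forall x, g x = false -> `|p.@[toR R x]| <= 3^-1.
Hypothesis g_block : forall x, (forall i, i \notin W -> x i = u i) -> x != u -> g x = false.

Lemma flip_mean_near q : 0 <= q <= 1 ->
  `|flip_mean q - (1 - q) ^+ #|W| * p.@[toR R u]| <= 3^-1.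
Proof.
move=> q01; rewrite /flip_mean (bigD1 u) //= flip_weight_u addrAC subrr add0r.
apply: le_trans (ler_norm_sum _ _ _) _.
have rest_le1 : \sum_(x | x != u) flip_weight q x <= 1.
  have := sum_flip_weight q; rewrite (bigD1 u) //= => e.
  have := flip_weight_ge0 u q01; move: e; set S := \sum_(x | _) _; lra.
apply: le_trans (_ : \sum_(x | x != u) flip_weight q x * 3^-1 <= _).
  apply: ler_sum => x nxu; rewrite normrM ger0_norm ?flip_weight_ge0 //.
  case: (boolP [forall i, (i \notin W) ==> (x i == u i)]) => [/forallP xW|].
    apply: ler_wpM2l; first exact: flip_weight_ge0.
    by apply/p_small/g_block => // i iW; exact/eqP/(implyP (xW i)).
  rewrite negb_forall => /existsP [i]; rewrite negb_imply => /andP[iW xi].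
  by rewrite (flip_weight_eq0 xi) ?iW ?orbT ?mul0r.
rewrite -mulr_suml; have : 0 < 3^-1 :> R by rewrite invr_gt0 ltr0n.
move: rest_le1; set S := \sum_(x | _) _; nra.
Qed.

Lemma flip_mean_small q : 0 <= q <= 1 -> 5%:R <= #|W|%:R * q ->
  `|flip_mean q| <= `|p.@[toR R u]| / 6%:R + 3^-1.
Proof.
move=> q01 mq; set a := (1 - q) ^+ #|W|; set M := `|p.@[toR R u]|.
have a0 : 0 <= a by rewrite exprn_ge0 // subr_ge0; case/andP: q01.
have a6 : a * 6%:R <= 1.
  apply: le_trans (one_sub_expr_le #|W| q01); apply: ler_wpM2l => //; move: mq; lra.
have aM : a * M <= M / 6%:R.
  by rewrite ler_pdivlMr ?ltr0n // mulrAC ler_piMl ?normr_ge0.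
have tri := ler_normD (flip_mean q - a * p.@[toR R u]) (a * p.@[toR R u]).
rewrite subrK normrM (ger0_norm a0) -/M in tri.
by have := flip_mean_near q01; rewrite -/a; lra.
Qed.

(* Lagrange interpolation of [flip_mean] at [node k / #|W|], [k <= d], recovers
   [p.[u] = flip_mean 0] with weights of total size [<= 4/3], while [flip_mean] is
   [<= |p.[u]|/6 + 1/3] at these points: impossible once [|p.[u]| >= 1]. *)
Lemma block_card_le d : (msize p <= d.+1)%N -> 1 <= `|p.@[toR R u]| ->
  (#|W| <= 4 + 100 * d ^ 2)%N.
Proof.
move=> sp pu1; rewrite leqNgt; apply/negP => big.
have m_gt0 : 0 < #|W|%:R :> R by rewrite ltr0n; lia.
pose xs (k : nat) : R := node R k / #|W|%:R.
have xs_inj : injective xs.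
  move=> a b /(mulIf (invr_neq0 (lt0r_neq0 m_gt0)))/eqP.
  by rewrite eqr_nat eqn_add2l eqn_mul2l /= eqn_exp2r // => /eqP.
have xs_coef i : \prod_(j < d.+1 | j != i) (xs j / (xs j - xs i)) = lcoef R d i.
  rewrite /lcoef big_mkord; apply: eq_bigr => j _.
  by rewrite /xs -mulrBl invf_div mulrA divfK ?lt0r_neq0.
set M := `|p.@[toR R u]| in pu1 *.
have xs_small (i : 'I_d.+1) : `|flip_mean (xs i)| <= M / 6%:R + 3^-1.
  have node_le : node R i <= #|W|%:R.
    rewrite ler_nat; have : (i ^ 2 <= d ^ 2)%N by rewrite leq_exp2r // -ltnS.
    by move: big; lia.
  apply: flip_mean_small.
    by rewrite divr_ge0 ?ler0n //= ler_pdivrMr // mul1r.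
  by rewrite /xs mulrC divfK ?lt0r_neq0 // ler_nat leq_addr.
have S_le := sum_norm_lcoef_le R d; rewrite big_mkord in S_le.
have S_ge0 : 0 <= \sum_(i < d.+1) `|lcoef R d i| by apply: sumr_ge0.
have : M <= (M / 6%:R + 3^-1) * \sum_(i < d.+1) `|lcoef R d i|.
  have eM : M = `|\sum_(i < d.+1) flip_mean (xs i) * lcoef R d i|.
    rewrite /M -flip_mean0 flip_mean_polyE (lagrange_at0 xs_inj (size_flip_mean_poly sp)).
    by congr `|_|; apply: eq_bigr => i _; rewrite -flip_mean_polyE xs_coef.
  rewrite {1}eM; apply: le_trans (ler_norm_sum _ _ _) _; rewrite mulr_sumr; apply: ler_sum => i _.
  by rewrite normrM ler_wpM2r.
move: S_le S_ge0 pu1; rewrite /ratn; set S := \sum_(i < d.+1) _; nra.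
Qed.

End FlipMean.

Lemma block_bounded_Nwitness (R : realType) n (f : cube n -> bool) D :
  Nwitness R f D -> Nwitness R (negf f) D -> block_bounded f (4 + 100 * D ^ 2).
Proof.
move=> [p [sp [p_lo p_hi]]] [q [sq [q_lo q_hi]]] u W sW.
case fu : (f u).
  apply: (block_card_le (g := f)) sp (p_hi _ fu) => // x xo nxu.
  by have := sW x xo nxu; rewrite fu eqb_id => /negbTE.
have nfu : negf f u by rewrite /negf fu.
apply: (block_card_le (g := negf f)) sq (q_hi _ nfu) => // x xo nxu.
by have := sW x xo nxu; rewrite /negf fu eqbF_neg negbK => ->.
Qed.

Lemma Ndeg_spec (R : realType) n (g : cube n -> bool) :
  Ndeg R g = n \/ Nwitness R g (Ndeg R g).
Proof.
rewrite /Ndeg; apply: (big_ind (fun v => v = n \/ Nwitness R g v)) => [|a b|i /asboolP];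
  by [left | rewrite /minn; case: ifP | right].
Qed.

Lemma Nwitness_leq (R : realType) n (g : cube n -> bool) a b :
  (a <= b)%N -> Nwitness R g a -> Nwitness R g b.
Proof. by move=> ab [q [sq q_spec]]; exists q; split=> //; apply: leq_trans sq _. Qed.

Lemma Nwitness_maxn (R : realType) n (f : cube n -> bool) (D := maxn (Ndeg R f) (Ndeg R (negf f))) :
  (n <= D)%N \/ Nwitness R f D /\ Nwitness R (negf f) D.
Proof.
have [nf|wf] := Ndeg_spec R f; first by left; rewrite /D nf leq_maxl.
have [nnf|wnf] := Ndeg_spec R (negf f); first by left; rewrite /D nnf leq_maxr.
by right; split; [apply: Nwitness_leq wf | apply: Nwitness_leq wnf]; rewrite ?leq_maxl ?leq_maxr.
Qed.

Lemma Ndeg_gt0 (R : realType) n (f : cube n -> bool) : nonconstant f -> (0 < Ndeg R f)%N.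
Proof.
move=> [x [y fxy]]; rewrite lt0n; have [->|wf] := Ndeg_spec R f.
  apply: contraNneq fxy => n0; apply/eqP; congr f.
  by apply/ffunP => -[i lt_in]; exfalso; rewrite n0 in lt_in.
apply/eqP => f0; move: wf; rewrite f0 => -[p [/msize1_polyC p_const [p_lo p_hi]]].
have pE v : (p.@[v] = p@_0)%R by rewrite {1}p_const mevalC.
by case fx : (f x); case fy : (f y); rewrite ?fx ?fy // in fxy;
  [have := p_hi _ fx; have := p_lo _ fy | have := p_hi _ fy; have := p_lo _ fx];
  rewrite !pE; lra.
Qed.

Lemma certx_le_dim n (f : cube n -> bool) x : (certx f x <= n)%N.
Proof.
by apply: (big_ind (fun v => v <= n)%N) => // [a b|S _]; rewrite ?geq_min;
  [case: (a <= n)%N | rewrite -[n in (_ <= n)%N]card_ord max_card].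
Qed.

Theorem theorem3p10 :
  exists c : nat, forall (R : realType) (n : nat) (f : cube n -> bool) (k : nat),
    nonconstant f -> zebra f -> alt f = k -> (1 <= k)%N ->
    (certC f <= c * (alt f * maxn (Ndeg R f ^ 2) (Ndeg R (negf f) ^ 2)))%N.
Proof.
exists 104 => R n f k ncf zf <- alt_gt0.
set D := maxn (Ndeg R f) (Ndeg R (negf f)).
have D_gt0 : 0 < D := leq_trans (Ndeg_gt0 R ncf) (leq_maxl _ _).
have D_le_D2 : D <= D ^ 2 by rewrite expnS expn1 leq_pmulr.
have D2_le : D ^ 2 <= maxn (Ndeg R f ^ 2) (Ndeg R (negf f) ^ 2).
  by rewrite /D /maxn; case: ltnP => _; rewrite ?leq_maxl ?leq_maxr.
apply: (@leq_trans (104 * (alt f * D ^ 2))); last by rewrite !leq_mul2l D2_le !orbT.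
apply/bigmax_leqP => x _.
have [nD | [wf wnf]] := Nwitness_maxn R f.
  apply: leq_trans (certx_le_dim f x) _; apply: leq_trans nD _; nia.
apply: leq_trans (certx_le_alt_mul zf (block_bounded_Nwitness wf wnf) x) _.
nia.
Qed.
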